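(* For every positive integer $R$ prime to $p$, \[ D_R-S_R=\Delta_R^{(p)}\big(I-(S_R+I)A_R\big)+(\Theta_R-I)^{(p)}S_RA_R+S_R(A_R-I). \]
   Context: Let $p$ be a prime and $K$ a complete discrete valuation field of characteristic $p$ with algebraically closed residue field $k$, normalized valuation $v_K$. Fix $t\in K$ with $v_K(t)=-1$; every $x\in K$ is uniquely $\sum_{l\ge v_K(x)}x_lt^{-l}$ with $x_l\in k$, and $\mathrm{coef}_{K,l}(x)=x_l$. $UT_n(F)$ (resp. $NT_n(F)$) denotes upper triangular $n\times n$ matrices over $F$ with diagonal entries $1$ (resp. $0$); $X^{(p^m)}$ raises every entry of $X$ to the $p^m$-th power. For $X=(x_{i,j})\in UT_n(K)$ put $v_K(X)=\min_{i<j}v_K(x_{i,j})/(j-i)$. Let $n\ge2$ and $L/K$ a totally wildly ramified finite Galois extension with $\mathrm{Gal}(L/K)\cong UT_n(\mathbb F_p)$. Fix $A=(a_{i,j})\in UT_n(K)$ with $\mathrm{coef}_{K,l}(a_{i,j})=0$ for all $i<j$ and $l\in p\mathbb Z\cup\mathbb Z_{\ge0}$, such that $X^{(p)}A=X$ has a solution $\Theta\in UT_n(L)$ whose entries generate $L$ over $K$; fix such $\Theta$. Put $m_A=-v_K(A)$, fix an integer $N>\log_p\big(n(p^{n(n-1)/2}+1)m_A+p\big)+\frac{n(n-1)}2$ and $q=p^N$. For a positive integer $R$ prime to $p$ let $K_R=K(T)$ with $T^q+T^{q-1}=t^R$. Let $t_R\in\overline K$ be the $qR$-th root of $t^R(1+T^{-1})^{-1}$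 congruent to $t^{1/q}$ modulo $t^{1/q}\mathfrak m_{\overline K}$ (so $t_R\in K_R$). Let $\iota_R:K\to K_R$ be the ring isomorphism $\sum_lx_lt^{-l}\mapsto\sum_lx_l^{1/q}t_R^{-l}$, extended to an isomorphism $K_{sep}\to K_{R,sep}=K_{sep}$ and applied entrywise to matrices; $P(x)=x^p-x$ entrywise. Put $A_R=\iota_R(A)$, $\Theta_R=\iota_R(\Theta)$, $W_{R,0}=I$, $W_{R,e}=A_R^{(p^{e-1})}W_{R,e-1}$ ($1\le e\le N$), $\Delta_R=\Theta_R-\Theta W_{R,N}$, $D_R=P(\Delta_R)$, and $S_R=(W_{R,N}^{(p)})^{-1}AW_{R,N-1}^{(p)}-I\in NT_n(K_R)$. *)

From HB Require Import structures.
From mathcomp Require Import all_boot all_order all_algebra.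
Set Implicit Arguments. Unset Strict Implicit. Unset Printing Implicit Defensive.
Import GRing.Theory.
Local Open Scope ring_scope.

Definition frobmx (F : fieldType) (n : nat) (e : nat) (X : 'M[F]_n) : 'M[F]_n :=
  map_mx (fun x => x ^+ e) X.

Definition is_UT (F : fieldType) (n : nat) (X : 'M[F]_n) : Prop :=
  (forall i j : 'I_n, (j < i)%N -> X i j = 0) /\ (forall i : 'I_n, X i i = 1).

Fixpoint Wmx (F : fieldType) (n : nat) (p : nat) (A : 'M[F]_n) (e : nat) : 'M[F]_n :=
  match e with
  | 0 => 1%:M
  | e'.+1 => frobmx (p ^ e') A *m Wmx p A e'
  end.

From HB Require Import structures.
From mathcomp Require Import all_boot all_order all_algebra.
Import GRing.Theory.
Local Open Scope ring_scope.

(* Both sides reduce to a ring identity once three facts are available.  In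
   characteristic p the map X |-> X^{(p)} is the ring morphism induced by
   Frobenius, so Frob(W_e) A_R = W_{e+1}.  As A is unitriangular, W_N is
   invertible, hence Frob(W_N) (S_R + I) = A Frob(W_{N-1}), and with
   Theta = Frob(Theta) A this gives Theta W_N = Frob(Theta) Frob(W_N)
   (S_R + I) A_R.  Applying iota_R, which commutes with entrywise powers, to
   the same fixed-point equation gives Theta_R = Frob(Theta_R) A_R. *)

Lemma frobmx_pchar (F : fieldType) (n p : nat) (chF : p \in [pchar F])
    (X : 'M[F]_n) :
  frobmx p X = map_mx (pFrobenius_aut chF) X.
Proof. by apply/matrixP => i j; rewrite !mxE. Qed.

Lemma frobmx_map (F : fieldType) (n e : nat) (f : {rmorphism F -> F})
    (X : 'M[F]_n) :
  frobmx e (map_mx f X) = map_mx f (frobmx e X).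
Proof. by apply/matrixP => i j; rewrite !mxE rmorphXn. Qed.

Lemma frobmx1 (F : fieldType) (n : nat) (X : 'M[F]_n) : frobmx 1 X = X.
Proof. by apply/matrixP => i j; rewrite !mxE expr1. Qed.

Lemma frobmxM (F : fieldType) (n a b : nat) (X : 'M[F]_n) :
  frobmx (b * a) X = frobmx a (frobmx b X).
Proof. by apply/matrixP => i j; rewrite !mxE exprM. Qed.

Lemma is_UT_unitmx (F : fieldType) (n : nat) (X : 'M[F]_n) :
  is_UT X -> X \in unitmx.
Proof.
case=> lowX diagX; rewrite unitmxE -det_tr det_trig; last first.
  by apply/is_trig_mxP => i j lt_ij; rewrite mxE lowX.
by rewrite big1 ?unitr1 // => i _; rewrite mxE diagX.
Qed.

Section FrobeniusTwistedProducts.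

Variables (F : fieldType) (n p : nat) (A : 'M[F]_n).
Hypothesis chF : p \in [pchar F].

Lemma WmxSr (e : nat) : frobmx p (Wmx p A e) *m A = Wmx p A e.+1.
Proof.
elim: e => [|e IHe].
  by rewrite /= frobmx_pchar map_mx1 mul1mx mulmx1 frobmx1.
by rewrite /= frobmx_pchar map_mxM -!frobmx_pchar -mulmxA IHe -frobmxM expnSr.
Qed.

Lemma Wmx_unitmx (e : nat) : A \in unitmx -> Wmx p A e \in unitmx.
Proof.
move=> uA; elim: e => [|e IHe]; first exact: unitmx1.
by rewrite -WmxSr unitmx_mul frobmx_pchar map_unitmx IHe.
Qed.

End FrobeniusTwistedProducts.

(* With T = Theta_R^{(p)}, V = Theta^{(p)} W_N^{(p)}, s = S_R and a = A_R,
   the left-hand side is D_R - S_R. *)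
Lemma fixpoint_defect_identity (R : pzRingType) (T V s a : R) :
  (T - V) - (T * a - V * (s + 1) * a) - s
  = (T - V) * (1 - (s + 1) * a) + (T - 1) * s * a + s * (a - 1).
Proof.
have -> : s * (a - 1) = s * a - s by rewrite mulrBr mulr1.
have -> : (T - 1) * s * a = T * s * a - s * a by rewrite !mulrBl mul1r.
have -> : (T - V) * (1 - (s + 1) * a)
          = (T - V) - (T * s * a + T * a) + V * (s + 1) * a.
  by rewrite mulrBr mulr1 mulrA !mulrBl opprB addrA addrAC mulrDr mulr1 mulrDl.
rewrite addrA (addrA _ (T * s * a)) subrK; congr (_ - s).
rewrite opprB addrA [RHS]addrAC opprD addrA (addrAC _ (- (T * a))) subrK.
by rewrite addrAC.
Qed.

Theorem lemma13 (p n N : nat) (F : fieldType)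
  (iota : nat -> {rmorphism F -> F}) (A Theta : 'M[F]_n) :
  prime p -> p \in [pchar F] -> (2 <= n)%N -> (0 < N)%N ->
  (forall R : nat, bijective (iota R)) ->
  is_UT A -> is_UT Theta -> frobmx p Theta *m A = Theta ->
  forall R : nat, (0 < R)%N -> coprime R p ->
  let AR := map_mx (iota R) A in
  let ThR := map_mx (iota R) Theta in
  let W := Wmx p AR in
  let Delta := ThR - Theta *m W N in
  let D := frobmx p Delta - Delta in
  let S := invmx (frobmx p (W N)) *m A *m frobmx p (W N.-1) - 1%:M in
  D - S = frobmx p Delta *m (1%:M - (S + 1%:M) *m AR)
          + frobmx p (ThR - 1%:M) *m S *m AR + S *m (AR - 1%:M).
Proof.
move=> _ chF _ N_gt0 _ utA _ fixTheta R _ _ AR ThR W Delta D S.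
have unit_frobWN : frobmx p (W N) \in unitmx.
  by rewrite frobmx_pchar map_unitmx Wmx_unitmx // map_unitmx is_UT_unitmx.
have frobWN_S : frobmx p (W N) *m (S + 1%:M) = A *m frobmx p (W N.-1).
  by rewrite subrK !mulmxA mulmxV // mul1mx.
have ThetaWN : Theta *m W N
    = frobmx p Theta *m frobmx p (W N) *m (S + 1%:M) *m AR.
  rewrite -(mulmxA (frobmx p Theta)) frobWN_S mulmxA fixTheta -mulmxA WmxSr //.
  by rewrite prednK.
have fixThR : ThR = frobmx p ThR *m AR.
  by rewrite /ThR -{1}fixTheta map_mxM frobmx_map.
have frobDelta : frobmx p Delta
    = frobmx p ThR - frobmx p Theta *m frobmx p (W N).
  by rewrite !frobmx_pchar map_mxB map_mxM.
have frobThR1 : frobmx p (ThR - 1%:M) = frobmx p ThR - 1%:M.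
  by rewrite !frobmx_pchar map_mxB map_mx1.
rewrite /D frobThR1 frobDelta /Delta ThetaWN {2}fixThR.
exact: fixpoint_defect_identity.
Qed.
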